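(* Let $T$ be a contraction on a Hilbert space such that $1-TT^*$ has finite rank. Then the limit $\lim_{n\to\infty} \frac{1}{n}\operatorname{tr}(1 - T^n {T^*}^n)$ exists and $$\lim_{n\to\infty} \frac{\operatorname{tr}(1 - T^n {T^*}^n)}{n} = \lim_{n\to\infty} \operatorname{tr}\big({T^*}^n T^n (1-TT^* )\big),$$ the limit on the right also existing (the sequence $\operatorname{tr}({T^*}^n T^n(1-TT^* ))$ being non-increasing and non-negative). *)

From HB Require Import structures.
From mathcomp Require Import all_boot all_order all_algebra.
From mathcomp Require Import all_classical all_reals.
From mathcomp Require Import topology normedtype sequences.
From mathcomp Require Import complex.
Set Implicit Arguments.
Unset Strict Implicit.
Unset Printing Implicit Defensive.
Import Order.TTheory GRing.Theory Num.Theory.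
Local Open Scope ring_scope.

Section Hilbert.
Variable R : realType.
Local Notation C := R[i].
Variable V : lmodType C.
Variable ip : V -> V -> C.

Definition inner_product_axioms : Prop :=
  [/\ (forall a x y z, ip (a *: x + y) z = a * ip x z + ip y z),
      (forall x y, ip y x = Num.conj (ip x y)),
      (forall x, 0 <= ip x x) &
      (forall x, ip x x = 0 -> x = 0)].

Definition hnorm (x : V) : R := Num.sqrt (complex.Re (ip x x)).

Definition hcomplete : Prop :=
  forall u : nat -> V,
    (forall e : R, 0 < e -> exists N, forall m n, (N <= m)%N -> (N <= n)%N ->
        hnorm (u m - u n) < e) ->
    exists l : V, forall e : R, 0 < e -> exists N, forall n, (N <= n)%N ->
        hnorm (u n - l) < e.

Definition hilbert_space : Prop := inner_product_axioms /\ hcomplete.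

Definition his_adjoint (T Ts : V -> V) : Prop :=
  forall x y, ip (T x) y = ip x (Ts y).

Definition hcontraction (T : V -> V) : Prop := forall x, hnorm (T x) <= hnorm x.

Definition hin_span (e : seq V) (x : V) : Prop :=
  exists c : seq C, size c = size e /\
    x = \sum_(i < size e) c`_i *: e`_i.

Definition horthonormal (e : seq V) : Prop :=
  forall i j, (i < size e)%N -> (j < size e)%N ->
    ip e`_i e`_j = (i == j)%:R.

Definition hfinite_rank (F : V -> V) : Prop :=
  exists e : seq V, forall x, hin_span e (F x).

Definition ftrace_is (F : V -> V) (t : C) : Prop :=
  exists e : seq V, [/\ horthonormal e, (forall x, hin_span e (F x)) &
     t = \sum_(i < size e) ip (F e`_i) e`_i].

(* the ftrace of a finite-rank operator (well defined: independent of the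
   horthonormal family chosen); 0 by convention otherwise *)
Definition ftrace (F : V -> V) : C := xget 0 (ftrace_is F).

End Hilbert.

From HB Require Import structures.
From mathcomp Require Import all_boot all_order all_algebra.
From mathcomp Require Import all_classical all_reals.
From mathcomp Require Import topology normedtype sequences.
From mathcomp Require Import complex.
From mathcomp.algebra_tactics Require Import ring.
Set Implicit Arguments.
Unset Strict Implicit.
Unset Printing Implicit Defensive.
Import Order.TTheory GRing.Theory Num.Theory.
Import numFieldNormedType.Exports.
Local Open Scope ring_scope.
Local Open Scope complex_scope.
Local Open Scope classical_set_scope.

(* The defect D = 1 - T T^* of a contraction is a positive operator, and a
   positive operator of finite rank is a finite sum of rank-one operators
   x |-> <x, u> u (Gram-Schmidt for the semi-inner product <D x, y>).  Hence
   tr (T^*^n T^n D) = sum_u ||T^n u||^2, which is non-negative and, T being a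
   contraction, non-increasing, so it converges.  Since
   1 - T^n T^*^n = sum_(k < n) T^k D T^*^k, the trace of 1 - T^n T^*^n is the
   n-th partial sum of that sequence, and its average converges to the same
   limit by Cesaro.  Traces are evaluated through the formula
   tr (x |-> sum_i <x, a_i> b_i) = sum_i <b_i, a_i>, which also shows that
   [ftrace] does not depend on the orthonormal family. *)

Lemma complex_ge0_Re (R : realType) (z : R[i]) : 0 <= z -> z = (complex.Re z)%:C.
Proof. by move=> z_ge0; rewrite {1}[z]complexE (ger0_Im z_ge0) mulr0 addr0. Qed.

Lemma Re_ge0 (R : realType) (z : R[i]) : 0 <= z -> 0 <= complex.Re z.
Proof. by move=> z_ge0; rewrite -ler0c -complex_ge0_Re. Qed.

Lemma conj_realC (R : realType) (x : R) : Num.conj x%:C = x%:C.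
Proof. exact: conjc_real. Qed.

Lemma exists_inv_sqrt (R : realType) (c : R[i]) : 0 < c ->
  exists k : R, k%:C * k%:C = c^-1.
Proof.
move=> c_gt0; have Re_gt0 : 0 < complex.Re c by move: c_gt0; rewrite ltcE => /andP[].
exists (Num.sqrt (complex.Re c))^-1.
rewrite -rmorphM /= -invfM -expr2 sqr_sqrtr ?ltW // fmorphV /=.
by rewrite -complex_ge0_Re ?ltW.
Qed.

Section InnerProductSpace.
Variables (R : realType) (V : lmodType R[i]) (ip : V -> V -> R[i]).
Hypothesis ipA : inner_product_axioms ip.

(** * Inner-product algebra *)

Lemma ipDZl a x y z : ip (a *: x + y) z = a * ip x z + ip y z.
Proof. by case: ipA. Qed.

Lemma ipC x y : ip y x = Num.conj (ip x y).
Proof. by case: ipA. Qed.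

Lemma ip_ge0 x : 0 <= ip x x.
Proof. by case: ipA => _ _ ->. Qed.

Lemma ip_eq0 x : ip x x = 0 -> x = 0.
Proof. by case: ipA => _ _ _; apply. Qed.

Lemma ipDl x y z : ip (x + y) z = ip x z + ip y z.
Proof. by rewrite -{1}(scale1r x) ipDZl mul1r. Qed.

Lemma ip0l z : ip 0 z = 0.
Proof. by apply: (addrI (ip 0 z)); rewrite -ipDl !addr0. Qed.

Lemma ipZl a x z : ip (a *: x) z = a * ip x z.
Proof. by rewrite -(addr0 (a *: x)) ipDZl ip0l addr0. Qed.

Lemma ipNl x z : ip (- x) z = - ip x z.
Proof. by rewrite -scaleN1r ipZl mulN1r. Qed.

Lemma ipBl x y z : ip (x - y) z = ip x z - ip y z.
Proof. by rewrite ipDl ipNl. Qed.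

Lemma ip_suml (I : Type) (r : seq I) (P : pred I) (F : I -> V) z :
  ip (\sum_(i <- r | P i) F i) z = \sum_(i <- r | P i) ip (F i) z.
Proof. exact: (big_morph (ip^~ z) (fun x y => ipDl x y z) (ip0l z)). Qed.

Lemma ipDr x y z : ip z (x + y) = ip z x + ip z y.
Proof. by rewrite ipC ipDl rmorphD [ip z x]ipC [ip z y]ipC. Qed.

Lemma ipZr a x z : ip z (a *: x) = Num.conj a * ip z x.
Proof. by rewrite ipC ipZl rmorphM [ip z x]ipC. Qed.

Lemma ip0r z : ip z 0 = 0.
Proof. by rewrite ipC ip0l rmorph0. Qed.

Lemma ipNr x z : ip z (- x) = - ip z x.
Proof. by rewrite ipC ipNl rmorphN [ip z x]ipC. Qed.

Lemma ipBr x y z : ip z (x - y) = ip z x - ip z y.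
Proof. by rewrite ipDr ipNr. Qed.

Lemma ip_sumr (I : Type) (r : seq I) (P : pred I) (F : I -> V) z :
  ip z (\sum_(i <- r | P i) F i) = \sum_(i <- r | P i) ip z (F i).
Proof. exact: (big_morph (ip z) (fun x y => ipDr x y z) (ip0r z)). Qed.

Lemma ip_conj_self x : Num.conj (ip x x) = ip x x.
Proof. by rewrite -ipC. Qed.

Lemma ip_inj x y : (forall z, ip x z = ip y z) -> x = y.
Proof.
by move=> eq_xy; apply/eqP; rewrite -subr_eq0; apply/eqP/ip_eq0; rewrite ipBl eq_xy subrr.
Qed.

Section LinearMap.
Variable f : V -> V.
Hypothesis f_lin : linear f.

Lemma linear_mapD x y : f (x + y) = f x + f y.
Proof. by rewrite -(scale1r x) f_lin !scale1r. Qed.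

Lemma linear_map0 : f 0 = 0.
Proof. by apply: (addrI (f 0)); rewrite -linear_mapD !addr0. Qed.

Lemma linear_mapZ a x : f (a *: x) = a *: f x.
Proof. by rewrite -(addr0 (a *: x)) f_lin linear_map0 addr0. Qed.

Lemma linear_mapB x y : f (x - y) = f x - f y.
Proof. by rewrite linear_mapD -scaleN1r linear_mapZ scaleN1r. Qed.

Lemma linear_map_sum (I : Type) (r : seq I) (P : pred I) (F : I -> V) :
  f (\sum_(i <- r | P i) F i) = \sum_(i <- r | P i) f (F i).
Proof. exact: (big_morph f linear_mapD linear_map0). Qed.

End LinearMap.

Lemma linear_iter (f : V -> V) n : linear f -> linear (iter n f).
Proof. by move=> f_lin; elim: n => [//|n IHn] a x y; rewrite /= IHn f_lin. Qed.

(** * Orthonormal families and Gram-Schmidt *)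

Definition proj (e : seq V) x := \sum_(i < size e) ip x e`_i *: e`_i.

(* For an orthonormal [e] this is membership in the span, see [hin_spanP]. *)
Definition spanned (e : seq V) x := proj e x = x.

Lemma proj_lin e : linear (proj e).
Proof.
move=> a x y; rewrite /proj scaler_sumr -big_split /=.
by apply: eq_bigr => i _; rewrite ipDZl scalerDl scalerA.
Qed.

Lemma proj_adj e x y : ip (proj e x) y = ip x (proj e y).
Proof.
rewrite ip_suml ip_sumr; apply: eq_bigr => i _.
by rewrite ipZl ipZr -ipC mulrC.
Qed.

Lemma ip_orthonormal_comb e (c : nat -> R[i]) (j : 'I_(size e)) :
  horthonormal ip e -> ip (\sum_(i < size e) c i *: e`_i) e`_j = c j.
Proof.
move=> e_on; rewrite ip_suml (bigD1 j) //= ipZl e_on // eqxx mulr1 big1 ?addr0 //.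
by move=> i; rewrite -val_eqE => /negPf ne_ij; rewrite ipZl e_on // ne_ij mulr0.
Qed.

Lemma proj_cons g f y : proj (g :: f) y = ip y g *: g + proj f y.
Proof. by rewrite /proj big_ord_recl. Qed.

Lemma spanned_behead g f y : spanned (g :: f) y -> ip y g = 0 -> spanned f y.
Proof.
by move=> y_spanned yg0; move: y_spanned; rewrite /spanned proj_cons yg0 scale0r add0r.
Qed.

Lemma proj_orthonormal e x (j : 'I_(size e)) : horthonormal ip e ->
  ip (proj e x) e`_j = ip x e`_j.
Proof. exact: (ip_orthonormal_comb (fun i => ip x e`_i)). Qed.

Lemma hin_spanP e x : horthonormal ip e -> hin_span e x <-> spanned e x.
Proof.
move=> e_on; split => [[c [_ ->]]|x_spanned].
  by apply: eq_bigr => j _; rewrite ip_orthonormal_comb.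
exists (mkseq (fun i => ip x e`_i) (size e)); rewrite size_mkseq; split => //.
by rewrite -{1}x_spanned; apply: eq_bigr => i _; rewrite nth_mkseq.
Qed.

Lemma spannedD e x y : spanned e x -> spanned e y -> spanned e (x + y).
Proof. by rewrite /spanned (linear_mapD (proj_lin e)) => -> ->. Qed.

Lemma spannedZ e a x : spanned e x -> spanned e (a *: x).
Proof. by rewrite /spanned (linear_mapZ (proj_lin e)) => ->. Qed.

Lemma spanned_sum e (I : Type) (r : seq I) (P : pred I) (F : I -> V) :
  (forall i, P i -> spanned e (F i)) -> spanned e (\sum_(i <- r | P i) F i).
Proof.
move=> F_spanned; rewrite /spanned (linear_map_sum (proj_lin e)).
by apply: eq_bigr => i /F_spanned.
Qed.

Lemma spanned_hin_span e s x : {in s, forall v, spanned e v} ->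
  hin_span s x -> spanned e x.
Proof.
move=> s_spanned [c [_ ->]]; apply: spanned_sum => i _.
by apply/spannedZ/s_spanned/mem_nth.
Qed.

Lemma proj_rcons e u x : proj (rcons e u) x = proj e x + ip x u *: u.
Proof.
rewrite /proj size_rcons big_ord_recr /= nth_rcons ltnn eqxx; congr (_ + _).
by apply: eq_bigr => i _; rewrite nth_rcons ltn_ord.
Qed.

Lemma horthonormal_rcons e u : horthonormal ip e -> ip u u = 1 ->
  (forall j, (j < size e)%N -> ip u e`_j = 0) -> horthonormal ip (rcons e u).
Proof.
move=> e_on u_unit u_orth i j; rewrite size_rcons !ltnS !nth_rcons.
rewrite leq_eqVlt => /predU1P[-> | lt_ie]; rewrite leq_eqVlt => /predU1P[-> | lt_je].
- by rewrite !ltnn !eqxx.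
- by rewrite ltnn eqxx lt_je u_orth // gtn_eqF.
- by rewrite ltnn eqxx lt_ie ipC u_orth // ltn_eqF // conjC0.
- by rewrite lt_ie lt_je e_on.
Qed.

Lemma spanned_rcons e u x : horthonormal ip (rcons e u) -> spanned e x ->
  spanned (rcons e u) x.
Proof.
move=> eu_on x_spanned.
suff xu0 : ip x u = 0 by rewrite /spanned proj_rcons x_spanned xu0 scale0r addr0.
rewrite -{1}x_spanned ip_suml big1 // => i _.
have := eu_on i (size e); rewrite size_rcons !ltnS leqnn (ltnW (ltn_ord i)).
by rewrite !nth_rcons ltn_ord ltnn eqxx ltn_eqF // ipZl => /(_ isT isT) ->; rewrite mulr0.
Qed.

Lemma gram_schmidt_step e v : horthonormal ip e -> exists e',
  [/\ horthonormal ip e', spanned e' v & forall x, spanned e x -> spanned e' x].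
Proof.
move=> e_on; set w := v - proj e v.
have w_orth j : (j < size e)%N -> ip w e`_j = 0.
  by move=> lt_je; rewrite ipBl (proj_orthonormal _ (Ordinal lt_je)) // subrr.
have [w0|w_neq0] := eqVneq w 0.
  by exists e; split => //; apply/esym/eqP; rewrite -subr_eq0 -/w w0.
have ww_gt0 : 0 < ip w w.
  by rewrite lt_def ip_ge0 andbT; exact: contra_neq (@ip_eq0 w) w_neq0.
have [k kk] := exists_inv_sqrt ww_gt0.
set u := k%:C *: w.
have u_unit : ip u u = 1 by rewrite /u ipZl ipZr conj_realC mulrA kk mulVf ?gt_eqF.
have eu_on : horthonormal ip (rcons e u).
  by apply: horthonormal_rcons => // j /w_orth wej; rewrite /u ipZl wej mulr0.
exists (rcons e u); split => //; last by move=> x; exact: spanned_rcons.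
have proj_w : proj e w = 0 by apply: big1 => i _; rewrite w_orth // scale0r.
have vw : ip v w = ip w w.
  by rewrite -{1}(subrK (proj e v) v) -/w ipDl proj_adj proj_w ip0r addr0.
rewrite /spanned proj_rcons /u ipZr conj_realC vw scalerA mulrAC kk.
by rewrite mulVf ?gt_eqF // scale1r /w addrC subrK.
Qed.

Lemma exists_orthonormal_span (s : seq V) :
  exists e, horthonormal ip e /\ {in s, forall v, spanned e v}.
Proof.
elim: s => [|v s [e [e_on s_spanned]]]; first by exists [::]; split => // i.
have [e' [e'_on v_spanned e_sub]] := gram_schmidt_step v e_on.
by exists e'; split => // x; rewrite inE => /predU1P[-> | /s_spanned /e_sub].
Qed.

(** * Traces of finite-rank operators *)

Definition rank_sum (I : Type) (r : seq I) (a b : I -> V) x :=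
  \sum_(i <- r) ip x (a i) *: b i.

Lemma rank_sum_adj I r a b x y :
  ip (@rank_sum I r a b x) y = ip x (rank_sum r b a y).
Proof.
rewrite ip_suml ip_sumr; apply: eq_bigr => i _.
by rewrite ipZl ipZr -ipC mulrC.
Qed.

Lemma rank_sum_spanned e (I : eqType) r a b x :
  {in r, forall i, spanned e (b i)} -> spanned e (@rank_sum I r a b x).
Proof.
move=> b_spanned; rewrite /rank_sum big_seq.
by apply: spanned_sum => i /b_spanned; exact: spannedZ.
Qed.

Definition trace_on (e : seq V) (F : V -> V) := \sum_(i < size e) ip (F e`_i) e`_i.

Lemma trace_on_rank_sum e I r a b :
  trace_on e (@rank_sum I r a b) = \sum_(i <- r) ip (b i) (proj e (a i)).
Proof.
rewrite /trace_on (eq_bigr _ (fun j _ => ip_suml _ _ _ _)) exchange_big /=.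
apply: eq_bigr => i _; rewrite ip_sumr; apply: eq_bigr => j _.
by rewrite ipZl ipZr -ipC mulrC.
Qed.

Lemma trace_on_rank_sum_spanned e (I : eqType) r a b :
  {in r, forall i, spanned e (a i)} ->
  trace_on e (@rank_sum I r a b) = \sum_(i <- r) ip (b i) (a i).
Proof.
move=> a_spanned; rewrite trace_on_rank_sum !big_seq.
by apply: eq_bigr => i /a_spanned ->.
Qed.

Lemma trace_on_rank_sum_range e e' (I : eqType) r a b :
  {in r, forall i, spanned e (a i)} -> (forall x, spanned e' (@rank_sum I r a b x)) ->
  trace_on e' (rank_sum r a b) = \sum_(i <- r) ip (b i) (a i).
Proof.
move=> a_spanned range_spanned.
(* Expanding the range in [e'] and moving [rank_sum] across the inner product
   gives a second representation, with vectors [a'] in the span of [e];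
   computing the trace in [e] with both representations yields the claim. *)
set a' := fun j : 'I_(size e') => rank_sum r b a e'`_j.
have a'_spanned : {in index_enum 'I_(size e'), forall j, spanned e (a' j)}.
  by move=> j _; exact: rank_sum_spanned a_spanned.
have range_dual : rank_sum r a b =1 rank_sum (index_enum 'I_(size e')) a' (nth 0 e').
  by move=> x; rewrite -(range_spanned x); apply: eq_bigr => j _; rewrite rank_sum_adj.
rewrite -(trace_on_rank_sum_spanned b a_spanned).
have -> : trace_on e (rank_sum r a b) =
          trace_on e (rank_sum (index_enum 'I_(size e')) a' (nth 0 e')).
  by apply: eq_bigr => i _; rewrite range_dual.
rewrite (trace_on_rank_sum_spanned _ a'_spanned).
by apply: eq_bigr => j _; rewrite -rank_sum_adj.
Qed.

Lemma ftrace_rank_sum (I : eqType) (r : seq I) a b F : F =1 rank_sum r a b ->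
  ftrace ip F = \sum_(i <- r) ip (b i) (a i).
Proof.
move=> /funext ->.
have [e [e_on e_spanned]] := exists_orthonormal_span (map a r ++ map b r).
have a_spanned : {in r, forall i, spanned e (a i)}.
  by move=> i r_i; apply/e_spanned; rewrite mem_cat map_f.
have b_spanned : {in r, forall i, spanned e (b i)}.
  by move=> i r_i; apply/e_spanned; rewrite mem_cat map_f ?orbT.
apply: xget_unique.
  exists e; split => // [x|]; first exact/hin_spanP/rank_sum_spanned.
  by apply/esym/(trace_on_rank_sum_range a_spanned) => x; exact: rank_sum_spanned.
move=> t [e' [e'_on range_e' ->]].
by apply: trace_on_rank_sum_range a_spanned _ => x; apply/hin_spanP.
Qed.

(** * Positive operators of finite rank *)

Record positive_op (G : V -> V) : Prop := PositiveOp {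
  positive_op_lin : linear G;
  positive_op_sym : forall x y, ip (G x) y = ip x (G y);
  positive_op_ge0 : forall x, 0 <= ip (G x) x }.

Lemma id_positive_op : positive_op id.
Proof. by split => // x; exact: ip_ge0. Qed.

Section PositiveOperator.
Variable G : V -> V.
Hypothesis G_pos : positive_op G.
Let G_lin := positive_op_lin G_pos.
Let G_sym := positive_op_sym G_pos.
Let G_ge0 := positive_op_ge0 G_pos.

Lemma positive_op_cauchy_schwarz x g : ip (G g) g != 0 ->
  ip (G x) g * Num.conj (ip (G x) g) / ip (G g) g <= ip (G x) x.
Proof.
move=> c_neq0; set c := ip (G g) g; set al := ip (G x) g.
have c_real : Num.conj c = c by rewrite /c -ipC -G_sym.
have Gg_x : ip (G g) x = Num.conj al by rewrite G_sym ipC.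
set t := al / c.
have t_conj : Num.conj (- t) = - (Num.conj al / c).
  by rewrite /t -[in RHS]c_real -fmorphV -rmorphM -rmorphN.
rewrite -subr_ge0; apply: le_trans (G_ge0 ((- t) *: g + x)) _.
rewrite G_lin !ipDZl !ipDr !ipZr Gg_x -/c -/al t_conj /t.
by rewrite le_eqVlt; apply/orP; left; apply/eqP; field.
Qed.

Lemma positive_op_form_eq0 g : ip (G g) g = 0 -> G g = 0.
Proof.
move=> Ggg0; apply: ip_eq0; set y := G g; set a := ip y y.
have a_ge0 : 0 <= a := ip_ge0 y.
have Gy_g : ip (G y) g = a by rewrite G_sym.
have [Gyy0|Gyy_neq0] := eqVneq (ip (G y) y) 0.
  have := G_ge0 ((-1) *: y + g).
  rewrite G_lin !ipDZl !ipDr !ipZr -/y -/a Gy_g Ggg0 Gyy0.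
  rewrite conjCN1 mulr0 add0r addr0 !mulN1r -opprD oppr_ge0 => twice_a_le0.
  by apply/le_anti; rewrite a_ge0 andbT (le_trans _ twice_a_le0) // lerDl.
have := positive_op_cauchy_schwarz g Gyy_neq0; rewrite Ggg0 -/y -/a ip_conj_self.
have aa_ge0 : 0 <= a * a / ip (G y) y by rewrite mulr_ge0 ?invr_ge0 ?mulr_ge0.
move=> aa_le0; have /eqP : a * a / ip (G y) y = 0 by apply/le_anti; rewrite aa_le0.
by rewrite mulf_eq0 invr_eq0 (negPf Gyy_neq0) orbF mulf_eq0 orbb => /eqP.
Qed.

Variables (g : V) (k : R).
Hypothesis Ggg_neq0 : ip (G g) g != 0.
Hypothesis kk : k%:C * k%:C = (ip (G g) g)^-1.
Let u := k%:C *: G g.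

Lemma positive_op_sub_rank1 : positive_op (fun x => G x - ip x u *: u).
Proof.
have xu x : ip x u = k%:C * ip (G x) g by rewrite ipZr conj_realC G_sym.
have ux x : ip u x = k%:C * Num.conj (ip (G x) g) by rewrite ipZl G_sym ipC.
split.
- by move=> a x y; rewrite G_lin ipDZl scalerDl scalerBr -scalerA opprD addrACA.
- move=> x y; rewrite ipBl ipBr G_sym; congr (_ - _).
  by rewrite [LHS]ipZl [RHS]ipZr -ipC mulrC.
- move=> x; rewrite ipBl ipZl xu ux subr_ge0 mulrACA kk mulrC.
  exact: positive_op_cauchy_schwarz.
Qed.

Lemma sub_rank1_vanish : G g - ip g u *: u = 0.
Proof.
by rewrite ipZr conj_realC -G_sym /u scalerA mulrAC kk mulVf // scale1r subrr.
Qed.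

End PositiveOperator.

Lemma positive_op_rank_sum_orthonormal f G : horthonormal ip f -> positive_op G ->
  (forall x, spanned f (G x)) -> exists s : seq V, G =1 rank_sum s id id.
Proof.
elim: f G => [|g f IHf] G f_on G_pos G_spanned.
  by exists [::] => x; rewrite -(G_spanned x) /proj big_ord0 /rank_sum big_nil.
have f_on' : horthonormal ip f by move=> i j; exact: (f_on i.+1 j.+1).
have [Ggg0|Ggg_neq0] := eqVneq (ip (G g) g) 0.
  apply: IHf => // x; apply: spanned_behead (G_spanned x) _.
  by rewrite positive_op_sym // positive_op_form_eq0 // ip0r.
have [k kk] : exists k : R, k%:C * k%:C = (ip (G g) g)^-1.
  by apply: exists_inv_sqrt; rewrite lt_def Ggg_neq0 positive_op_ge0.
have G'_pos := positive_op_sub_rank1 G_pos Ggg_neq0 kk.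
have G'g0 := sub_rank1_vanish G_pos Ggg_neq0 kk.
set u := k%:C *: G g in G'_pos G'g0 *.
have G'_spanned x : spanned f (G x - ip x u *: u).
  apply: spanned_behead.
    rewrite -scaleNr; apply: spannedD; first exact: G_spanned.
    exact/spannedZ/spannedZ/G_spanned.
  by rewrite (positive_op_sym G'_pos) /= G'g0 ip0r.
have [s G's] := IHf _ f_on' G'_pos G'_spanned.
exists (u :: s) => x.
by rewrite /rank_sum big_cons -/(rank_sum s id id x) -G's addrC subrK.
Qed.

Lemma positive_op_rank_sum G : positive_op G -> hfinite_rank G ->
  exists s : seq V, G =1 rank_sum s id id.
Proof.
move=> G_pos [s0 range_s0].
have [f [f_on s0_spanned]] := exists_orthonormal_span s0.
apply: positive_op_rank_sum_orthonormal f_on G_pos _ => x.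
exact: spanned_hin_span s0_spanned (range_s0 x).
Qed.

(** * Contractions and their defect *)

Lemma hcontraction_ip T : hcontraction ip T -> forall x, ip (T x) (T x) <= ip x x.
Proof.
move=> T_contr x.
rewrite (complex_ge0_Re (ip_ge0 (T x))) (complex_ge0_Re (ip_ge0 x)) lecR.
by rewrite -ler_sqrt ?Re_ge0 ?ip_ge0 //; exact: T_contr.
Qed.

Section Contraction.
Variables T Ts : V -> V.
Hypothesis T_lin : linear T.
Hypothesis T_adj : his_adjoint ip T Ts.
Hypothesis T_contr : forall x, ip (T x) (T x) <= ip x x.

Lemma adjoint_symr x y : ip (Ts x) y = ip x (T y).
Proof. by rewrite ipC -T_adj -ipC. Qed.

Lemma adjoint_lin : linear Ts.
Proof.
by move=> a u v; apply: ip_inj => z; rewrite adjoint_symr !ipDZl !adjoint_symr.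
Qed.

Lemma adjoint_iter n x y : ip (iter n Ts x) y = ip x (iter n T y).
Proof. by elim: n y => [//|n IHn] y; rewrite iterS adjoint_symr IHn -iterSr. Qed.

Lemma adjoint_contraction x : ip (Ts x) (Ts x) <= ip x x.
Proof.
set y := Ts x; set s := ip y y.
have [s0|s_neq0] := eqVneq s 0; first by rewrite s0 ip_ge0.
have s_gt0 : 0 < s by rewrite lt_def s_neq0 ip_ge0.
have Ty_x : ip (T y) x = s by rewrite T_adj.
have TyTy_neq0 : ip (T y) (T y) != 0.
  by apply: contra_neq s_neq0 => /ip_eq0 Ty0; rewrite -Ty_x Ty0 ip0l.
have TyTy_gt0 : 0 < ip (T y) (T y) by rewrite lt_def TyTy_neq0 ip_ge0.
have := positive_op_cauchy_schwarz id_positive_op x TyTy_neq0.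
rewrite /= ipC conjCK Ty_x /s ip_conj_self; apply: le_trans.
by rewrite ler_pdivlMr // ler_pM2l // T_contr.
Qed.

Definition defect x := x - T (Ts x).

Lemma defect_positive : positive_op defect.
Proof.
split.
- by move=> a u v; rewrite /defect adjoint_lin T_lin scalerBr opprD addrACA.
- by move=> x y; rewrite /defect ipBl ipBr T_adj -adjoint_symr.
- by move=> x; rewrite /defect ipBl T_adj subr_ge0 adjoint_contraction.
Qed.

Lemma defect_telescope n x :
  x - iter n T (iter n Ts x) = \sum_(0 <= k < n) iter k T (defect (iter k Ts x)).
Proof.
elim: n => [|n IHn]; first by rewrite big_geq // subrr.
rewrite big_nat_recr //= -IHn /defect (linear_mapB (linear_iter n T_lin)).
by rewrite -iterSr -iterS addrA subrK.
Qed.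

Variable s : seq V.
Hypothesis defect_rank : defect =1 rank_sum s id id.

Definition defect_trace n := \sum_(u <- s) ip (iter n T u) (iter n T u).

Lemma defect_trace_ge0 n : 0 <= defect_trace n.
Proof. by apply: sumr_ge0 => u _; exact: ip_ge0. Qed.

Lemma defect_trace_nonincreasing n : defect_trace n.+1 <= defect_trace n.
Proof. by apply: ler_sum => u _; rewrite iterS T_contr. Qed.

Lemma ftrace_iter_defect n :
  ftrace ip (fun x => iter n Ts (iter n T (x - T (Ts x)))) = defect_trace n.
Proof.
have Tn_lin := linear_iter n T_lin; have Tsn_lin := linear_iter n adjoint_lin.
rewrite (@ftrace_rank_sum _ s id (fun u => iter n Ts (iter n T u))).
  by apply: eq_bigr => u _; rewrite adjoint_iter.
move=> x; rewrite -/(defect x) defect_rank /rank_sum.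
rewrite (linear_map_sum Tn_lin) (linear_map_sum Tsn_lin); apply: eq_bigr => u _.
by rewrite (linear_mapZ Tn_lin) (linear_mapZ Tsn_lin).
Qed.

Lemma ftrace_sub_iter n :
  ftrace ip (fun x => x - iter n T (iter n Ts x)) =
  \sum_(0 <= k < n) defect_trace k.
Proof.
pose w (p : nat * V) := iter p.1 T p.2.
rewrite (@ftrace_rank_sum _ [seq (k, u) | k <- index_iota 0 n, u <- s] w w).
  by rewrite big_allpairs.
move=> x; rewrite defect_telescope /rank_sum big_allpairs; apply: eq_bigr => k _.
rewrite defect_rank /rank_sum (linear_map_sum (linear_iter k T_lin)).
by apply: eq_bigr => u _; rewrite (linear_mapZ (linear_iter k T_lin)) adjoint_iter.
Qed.

End Contraction.
End InnerProductSpace.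

Lemma nonincreasing_ge0_cvg_mean (R : realType) (a : nat -> R[i]) :
  (forall n, 0 <= a n) -> (forall n, a n.+1 <= a n) ->
  exists L : R, (fun n => complex.Re (a n)) @ \oo --> L /\
     (fun n : nat => complex.Re (\sum_(0 <= k < n) a k) / n%:R) @ \oo --> L.
Proof.
move=> a_ge0 a_decr; set r := fun n => complex.Re (a n).
have r_decr : nonincreasing_seq r.
  by apply/nonincreasing_seqP => n; move: (a_decr n); rewrite lecE => /andP[].
have r_lbound : has_lbound (range r) by exists 0 => _ [n _ <-]; exact: Re_ge0.
have r_cvg := nonincreasing_cvgn r_decr r_lbound.
exists (inf (range r)); split => //.
rewrite -cvg_shiftS.
suff -> : [sequence complex.Re (\sum_(0 <= k < n.+1) a k) / n.+1%:R]_n =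
          arithmetic_mean r by exact: cesaro.
by apply/funext => n; rewrite /arithmetic_mean /series /= mulrC raddf_sum.
Qed.

Theorem mainTheorem4 (R : realType) (V : lmodType R[i]) (ip : V -> V -> R[i])
    (T Ts : V -> V) :
  hilbert_space ip ->
  linear T ->
  his_adjoint ip T Ts ->
  hcontraction ip T ->
  hfinite_rank (fun x => x - T (Ts x)) ->
  [/\ (forall n : nat,
         0 <= ftrace ip (fun x => iter n Ts (iter n T (x - T (Ts x))))),
      (forall n : nat,
         ftrace ip (fun x => iter n.+1 Ts (iter n.+1 T (x - T (Ts x))))
         <= ftrace ip (fun x => iter n Ts (iter n T (x - T (Ts x))))) &
      exists L : R,
        (fun n : nat =>
           complex.Re (ftrace ip (fun x => iter n Ts (iter n T (x - T (Ts x))))))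
          @ \oo --> L
        /\
        (fun n : nat =>
           complex.Re (ftrace ip (fun x => x - iter n T (iter n Ts x))) / n%:R)
          @ \oo --> L].
Proof.
move=> [ipA _] T_lin T_adj /(hcontraction_ip ipA) T_contr D_rank.
have D_pos := defect_positive ipA T_lin T_adj T_contr.
have [s D_eq] := positive_op_rank_sum ipA D_pos D_rank.
have trace_iter := ftrace_iter_defect ipA T_lin T_adj D_eq.
have trace_sub := ftrace_sub_iter ipA T_lin T_adj D_eq.
have D_ge0 := defect_trace_ge0 ipA T s.
have D_decr := defect_trace_nonincreasing T_contr s.
have [L [cvg_trace cvg_mean]] := nonincreasing_ge0_cvg_mean D_ge0 D_decr.
split => [n|n|]; rewrite ?trace_iter //; exists L; split.
- by under eq_fun do rewrite trace_iter.
- by under eq_fun do rewrite trace_sub.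
Qed.
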